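(* In the setting below, assume that $g(x)$ and $l(x)$ are both self-reciprocal. If $\gcd\big(r_{22}(x),\ g_{11}(x)\bar g_{11}(x)+g_{12}(x)\bar g_{12}(x)\big)\neq 1$, then $C$ is not Euclidean LCD.
   Context: Let $q$ be a prime power, $F=\mathbb{F}_q$, $m\ge1$ with $\gcd(q,m)=1$, and $R=F[x]/\langle x^m-1\rangle$; elements of $R$ are represented by polynomials of degree $<m$ and identified with their coefficient vectors in $F^m$. A quasi-cyclic code of length $2m$ and index $2$ is an $R$-submodule $C\subseteq R^2$. The Euclidean inner product of $(a_1,a_2),(b_1,b_2)\in R^2$ is the sum of the standard dot products of the coefficient vectors of $a_1,b_1$ and of $a_2,b_2$; $C$ is Euclidean LCD if $C\cap C^{\perp_e}=\{0\}$. For a nonzero polynomial $f$ of degree $k$, $f^*(x)=x^kf(x^{-1})$; $f$ is self-reciprocal if $f^*=\alpha f$ for some $\alpha\in F$. For a polynomial $f$ of degree at most $m$, $\bar f(x)=x^m f(x^{-1})$. Suppose $C$ is generated as an $R$-module by $(g_{11}(x),g_{12}(x))$ and $(0,g_{22}(x))$, where $g_{11},g_{12},g_{22}\in F[x]$ satisfy: $g_{11}\mid x^m-1$, $g_{22}\mid x^m-1$, $\deg g_{12}<\deg g_{22}$, and $g_{11}g_{22}\mid (x^m-1)g_{12}$. Define $g=\gcd(g_{11},g_{22})$, $l=(x^m-1)/\mathrm{lcm}(g_{11},g_{22})$, $g_{22}=g\,g_{22}'$, $r_{22}=\gcd(g_{22}',g_{22}'^* )$. *)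

From mathcomp Require Import all_boot all_algebra.
Set Implicit Arguments. Unset Strict Implicit. Unset Printing Implicit Defensive.
Import GRing.Theory.
Local Open Scope ring_scope.

Section QC.
Variable F : fieldType.

Definition xm1 (m : nat) : {poly F} := 'X^m - 1.

(* reciprocal f^*(x) = x^(deg f) f(1/x) *)
Definition recip (f : {poly F}) : {poly F} :=
  \poly_(i < size f) f`_((size f).-1 - i).

Definition self_reciprocal (f : {poly F}) : Prop :=
  f != 0 /\ exists alpha : F, recip f = alpha *: f.

(* bar f (x) = x^m f(1/x), for deg f <= m *)
Definition polybar (m : nat) (f : {poly F}) : {poly F} :=
  \poly_(i < m.+1) f`_(m - i).

Definition lcmp (p q : {poly F}) : {poly F} := (p * q) %/ gcdp p q.

(* Elements of R = F[x]/<x^m-1> are represented by polynomials of size <= m;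
   R^2 elements are pairs.  The R-submodule generated by (g11,g12), (0,g22): *)
Definition in_qc_code (m : nat) (g11 g12 g22 : {poly F})
  (c : {poly F} * {poly F}) : Prop :=
  exists a b : {poly F},
    c = ((a * g11) %% xm1 m, (a * g12 + b * g22) %% xm1 m).

Definition eucl_ip (m : nat) (u v : {poly F} * {poly F}) : F :=
  \sum_(i < m) (u.1`_i * v.1`_i + u.2`_i * v.2`_i).

Definition in_eucl_dual (m : nat) (g11 g12 g22 : {poly F})
  (v : {poly F} * {poly F}) : Prop :=
  [/\ (size v.1 <= m)%N, (size v.2 <= m)%N &
      forall c, in_qc_code m g11 g12 g22 c -> eucl_ip m c v = 0].

Definition eucl_LCD (m : nat) (g11 g12 g22 : {poly F}) : Prop :=
  forall v, in_qc_code m g11 g12 g22 v -> in_eucl_dual m g11 g12 g22 v ->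
    v = (0, 0).

End QC.

(* Work in R = F[x]/(x^m - 1), where x^-1 = x^(m-1): there f(x^-1) is
   [polyXinv m f], which agrees modulo x^m - 1 with the paper's bar f, itself
   x^k f^* for some k, and the Euclidean inner product of u and w is the
   constant term of u * w(x^-1).  Let d = gcd(r22, g11 bar g11 + g12 bar g12),
   nonconstant by hypothesis, and P = (x^m - 1)/d.  The codeword
   P(x^-1) (g11, g12) of C is orthogonal to every a (g11, g12) + b (0, g22),
   as these products reduce to multiples of P (g11 bar g11 + g12 bar g12) and
   of P g22, both divisible by P d = x^m - 1.  If C were LCD this codeword
   would vanish, forcing d | g11(x^-1); as also d | g22'(x^-1), the gcd D of
   d(x^-1) and x^m - 1 divides both g and g22', so D^2 | g22 | x^m - 1.
   Since x^m - 1 is separable when gcd(q, m) = 1, D is constant, i.e. d(x^-1)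
   is a unit modulo x^m - 1, which forces d to be constant. *)

From mathcomp Require Import all_boot all_algebra all_field.
From mathcomp Require Import fingroup cyclic ring zify.
Set Implicit Arguments. Unset Strict Implicit. Unset Printing Implicit Defensive.
Import GRing.Theory.
Local Open Scope ring_scope.

Lemma eq_modp_dvdp (F : fieldType) (d p q : {poly F}) :
  (p %% d = q %% d) <-> (d %| p - q).
Proof.
rewrite -{1}(subrK q p) modpD; split => [/(canRL (addrK _))|/modp_eq0P->].
  by rewrite subrr => /modp_eq0P.
by rewrite add0r.
Qed.

Lemma modp_sum (F : fieldType) (d : {poly F}) I (r : seq I) (f : I -> {poly F}) :
  (\sum_(i <- r) f i) %% d = \sum_(i <- r) f i %% d.
Proof. exact: (big_morph _ (fun p q => modpD d p q) (mod0p d)). Qed.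

Lemma comp_polyE_widen (F : fieldType) n (f q : {poly F}) : (size f <= n)%N ->
  f \Po q = \sum_(i < n) f`_i *: q ^+ i.
Proof.
move=> sf; rewrite comp_polyE (big_ord_widen n (fun i => f`_i *: q ^+ i) sf).
rewrite big_mkcond /=; apply: eq_bigr => i _.
case: ifPn => // /negbTE; rewrite ltnNge => /negbFE/(nth_default 0)->.
by rewrite scale0r.
Qed.

Section PolyXinv.

Variables (F : fieldType) (m : nat).
Hypothesis m_gt0 : (0 < m)%N.
Local Notation X := (xm1 F m).

Definition polyXinv (f : {poly F}) : {poly F} := f \Po 'X^(m.-1).

Lemma size_xm1 : size X = m.+1.
Proof. by rewrite /xm1 -polyC1 size_XnsubC. Qed.

Lemma xm1_neq0 : X != 0.
Proof. by rewrite -size_poly_eq0 size_xm1. Qed.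

Lemma size_dvdp_xm1 (f : {poly F}) : f %| X -> (size f <= m.+1)%N.
Proof. by move=> f_X; rewrite -size_xm1 dvdp_leq ?xm1_neq0. Qed.

Lemma size_modp_xm1 (f : {poly F}) : (size (f %% X)%R <= m)%N.
Proof. by rewrite -ltnS -size_xm1 ltn_modp xm1_neq0. Qed.

Lemma dvdp_xm1_XnM k : X %| 'X^(m * k) - 1.
Proof. by rewrite exprM subrX1 dvdp_mulIl. Qed.

Lemma modp_xm1_Xn n : 'X^n %% X = 'X^(n %% m).
Proof.
rewrite -[RHS](@modp_small _ _ X) ?size_xm1 ?size_polyXn ?ltnS ?ltn_pmod //.
apply/eq_modp_dvdp.
have -> : 'X^n - 'X^(n %% m) = ('X^(m * (n %/ m)) - 1) * 'X^(n %% m) :> {poly F}.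
  by rewrite mulrBl mul1r -exprD mulnC -divn_eq.
exact: dvdp_mulr (dvdp_xm1_XnM _).
Qed.

Lemma modp_xm1_comp_Xn (f : {poly F}) k j : k = j %[mod m] ->
  (f \Po 'X^k) %% X = (f \Po 'X^j) %% X.
Proof.
move=> ekj; rewrite !comp_polyE !modp_sum; apply: eq_bigr => i _.
by rewrite !modpZl -!exprM !modp_xm1_Xn -modnMml ekj modnMml.
Qed.

Lemma polyXinvM : {morph polyXinv : f g / f * g}.
Proof. by move=> f g; apply: comp_polyM. Qed.

Lemma polyXinv_modp (f : {poly F}) : polyXinv (f %% X) %% X = polyXinv f %% X.
Proof.
have X_polyXinvX : X %| polyXinv X.
  rewrite /polyXinv /xm1 comp_polyB comp_Xn_poly -polyC1 comp_polyC polyC1.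
  by rewrite -exprM mulnC dvdp_xm1_XnM.
rewrite {2}(divp_eq f X) /polyXinv comp_polyD comp_polyM modpD.
by rewrite (modp_eq0 (dvdp_mull _ X_polyXinvX)) add0r.
Qed.

Lemma dvdp_xm1_polyXinv (f : {poly F}) : X %| f -> X %| polyXinv f.
Proof.
move=> /modp_eq0P f0; apply/modp_eq0P.
by rewrite -polyXinv_modp f0 /polyXinv comp_poly0 mod0p.
Qed.

Lemma polyXinvK (f : {poly F}) : polyXinv (polyXinv f) %% X = f %% X.
Proof.
rewrite /polyXinv -comp_polyA comp_Xn_poly -exprM.
rewrite -{2}[f]comp_polyXr -[X in f \Po X]expr1; apply: modp_xm1_comp_Xn.
case: m m_gt0 => [|[|n]] //= _.
have -> : (n.+1 * n.+1 = n * n.+2 + 1)%N by nia.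
by rewrite modnMDl.
Qed.

Lemma polybar_recip (f : {poly F}) : (size f <= m.+1)%N ->
  polybar m f = 'X^(m.+1 - size f) * recip f.
Proof.
move=> sf; apply/polyP => j; rewrite coefXnM !coef_poly.
case: (ltnP j (m.+1 - size f)) => jk.
  have -> : (j < m.+1)%N by lia.
  by rewrite nth_default //; change (size f <= m - j)%N; lia.
case: (ltnP j m.+1) => jm.
  have -> : (j - (m.+1 - size f) < size f)%N by lia.
  by congr nth; lia.
by have -> : (j - (m.+1 - size f) < size f)%N = false by lia.
Qed.

Lemma polybar_modp (f : {poly F}) : (size f <= m.+1)%N ->
  polybar m f %% X = polyXinv f %% X.
Proof.
move=> sf; rewrite /polybar /polyXinv poly_def (comp_polyE_widen _ sf) !modp_sum.
rewrite (reindex_inj rev_ord_inj); apply: eq_bigr => i _ /=.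
have im : (i <= m)%N by rewrite -ltnS.
rewrite subSS subKn // !modpZl -exprM !modp_xm1_Xn; congr (_ *: 'X^_).
apply/eqP; rewrite -(eqn_modDr i) subnK //.
by rewrite -mulSnr prednK // modnn modnMr.
Qed.

Lemma dvdp_polyXinv_recip (d f : {poly F}) :
  d %| X -> f %| X -> d %| recip f -> d %| polyXinv f.
Proof.
move=> dX fX d_recf; have sf := size_dvdp_xm1 fX.
rewrite (dvdp_mod _ dX) -(polybar_modp sf) -(dvdp_mod _ dX) polybar_recip //.
exact: dvdp_mull.
Qed.

Lemma coef0_modp_xm1_Xn_polyXinv i j : (i < m)%N -> (j < m)%N ->
  (('X^i * polyXinv 'X^j) %% X)`_0 = (i == j)%:R.
Proof.
move=> im jm; rewrite /polyXinv comp_Xn_poly -exprM -exprD modp_xm1_Xn coefXn.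
rewrite eq_sym; congr ((nat_of_bool _)%:R); apply/eqP/eqP => [|->]; last first.
  by rewrite -mulSn prednK // modnMr.
move=> /(congr1 (fun k => (k + j) %% m)%N) /=.
by rewrite modnDml add0n -addnA -mulSnr prednK // addnC mulnC modnMDl !modn_small.
Qed.

Lemma sum_coefM_polyXinv (u w : {poly F}) : (size u <= m)%N -> (size w <= m)%N ->
  \sum_(i < m) u`_i * w`_i = ((u * polyXinv w) %% X)`_0.
Proof.
move=> su sw; rewrite -[u in RHS]comp_polyXr /polyXinv (comp_polyE_widen _ su).
rewrite (comp_polyE_widen _ sw) mulr_suml modp_sum coef_sum; apply: eq_bigr => i _.
have coef0_term (j : 'I_m) : ((u`_i *: 'X^i * (w`_j *: 'X^(m.-1) ^+ j)) %% X)`_0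
    = u`_i * w`_j * (i == j :> nat)%:R.
  by rewrite -scalerAl -scalerAr !modpZl !coefZ -[_ ^+ j]comp_Xn_poly
    -/(polyXinv _) coef0_modp_xm1_Xn_polyXinv // mulrA.
rewrite mulr_sumr modp_sum coef_sum (bigD1 i) //= big1 => [|j ij].
  by rewrite coef0_term eqxx mulr1 addr0.
by rewrite coef0_term val_eqE eq_sym (negbTE ij) mulr0.
Qed.

Lemma polyXinv_modp_mul_polyXinv (p f : {poly F}) :
  polyXinv ((polyXinv p * f) %% X) %% X = (p * polyXinv f) %% X.
Proof.
rewrite polyXinv_modp polyXinvM mulrC -[LHS]modp_mul polyXinvK modp_mul.
by rewrite mulrC.
Qed.

Lemma dvdp_gcd_polyXinv (d f : {poly F}) :
  d %| polyXinv f -> gcdp (polyXinv d) X %| f.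
Proof.
move=> /dvdpP[q qd_f]; rewrite (dvdp_mod _ (dvdp_gcdr _ _)) -polyXinvK.
rewrite -(dvdp_mod _ (dvdp_gcdr _ _)) qd_f polyXinvM.
exact: dvdp_mull (dvdp_gcdl _ _).
Qed.

Lemma dvdp_polyXinv_cofactor (d f : {poly F}) :
  d %| X -> X %| polyXinv (X %/ d) * f -> d %| polyXinv f.
Proof.
move=> dX /modp_eq0P Pf0; have P_neq0 := dvdpN0 (divp_dvd dX) xm1_neq0.
rewrite -(dvdp_mul2l _ _ P_neq0) divpK //; apply/modp_eq0P.
by rewrite -polyXinv_modp_mul_polyXinv Pf0 /polyXinv comp_poly0 mod0p.
Qed.

Lemma size_dvdp_xm1_coprimep_polyXinv (d : {poly F}) :
  d %| X -> coprimep (polyXinv d) X -> size d = 1%N.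
Proof.
rewrite coprimep_sym => dX cop; have Pd_X : X %/ d * d = X := divpK dX.
have P_neq0 := dvdpN0 (divp_dvd dX) xm1_neq0; have d_neq0 := dvdpN0 dX xm1_neq0.
have X_polyXinvP : X %| polyXinv (X %/ d).
  by rewrite -(Gauss_dvdpl _ cop) -polyXinvM Pd_X dvdp_xm1_polyXinv.
have /(dvdp_leq P_neq0) : X %| X %/ d.
  rewrite (dvdp_mod _ (dvdpp X)) -polyXinvK -dvdp_mod //.
  exact: dvdp_xm1_polyXinv.
have := size_mul P_neq0 d_neq0; rewrite Pd_X => ->.
rewrite -subn1 leq_subLR addnC leq_add2r => d_le1.
by apply/eqP; rewrite eqn_leq d_le1 size_poly_gt0.
Qed.

Lemma coprimep_polyXinv_sqfree (d a b : {poly F}) : m%:R != 0 :> F -> b %| X ->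
  d %| polyXinv a -> d %| polyXinv (b %/ gcdp a b) -> coprimep (polyXinv d) X.
Proof.
move=> m_neq0 bX /dvdp_gcd_polyXinv D_a /dvdp_gcd_polyXinv D_b'.
rewrite coprimep_def; set D := gcdp _ X in D_a D_b' *.
have D_gcd : D %| gcdp a b.
  by rewrite dvdp_gcd D_a (dvdp_trans D_b' (divp_dvd (dvdp_gcdr _ _))).
have D2_X : D ^+ 2 %| X.
  by rewrite (dvdp_trans _ bX) // -(divpK (dvdp_gcdr a b)) expr2 dvdp_mul.
apply: contraTT D2_X => D_nunit.
by rewrite (separable_nosquare (separable_Xn_sub_1 m_neq0)).
Qed.

End PolyXinv.

Section QuasiCyclicCode.

Variables (F : fieldType) (m : nat) (g11 g12 g22 : {poly F}).
Hypothesis m_gt0 : (0 < m)%N.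
Local Notation X := (xm1 F m).
Local Notation polyXinv := (polyXinv m).

Lemma in_eucl_dual_of_dvdp (v : {poly F} * {poly F}) :
  (size v.1 <= m)%N -> (size v.2 <= m)%N ->
  X %| g11 * polyXinv v.1 + g12 * polyXinv v.2 -> X %| g22 * polyXinv v.2 ->
  in_eucl_dual m g11 g12 g22 v.
Proof.
case: v => v1 v2 /= s1 s2 X_v12 X_v2; split=> // _ [a [b ->]].
rewrite /eucl_ip big_split /= !sum_coefM_polyXinv ?size_modp_xm1 //.
rewrite -coefD -modpD modpD ![_ %% X * _]mulrC !modp_mul -modpD.
have -> : polyXinv v1 * (a * g11) + polyXinv v2 * (a * g12 + b * g22)
    = a * (g11 * polyXinv v1 + g12 * polyXinv v2) + b * (g22 * polyXinv v2).
  by ring.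
by rewrite modp_eq0 ?coef0 // dvdp_add // dvdp_mull.
Qed.

Lemma in_eucl_dual_cofactor (d : {poly F}) :
  (size g11 <= m.+1)%N -> (size g12 <= m.+1)%N ->
  d %| X -> d %| g22 -> d %| g11 * polybar m g11 + g12 * polybar m g12 ->
  in_eucl_dual m g11 g12 g22
    ((polyXinv (X %/ d) * g11) %% X, (polyXinv (X %/ d) * g12) %% X).
Proof.
move=> s11 s12 dX d_g22 d_h; set P := X %/ d.
have X_P f : d %| f -> X %| P * f.
  by move=> d_f; rewrite -[Y in Y %| _](divpK dX) dvdp_mul.
have modX g f :
    (g * polyXinv ((polyXinv P * f) %% X)) %% X = (P * (g * polyXinv f)) %% X.
  by rewrite -modp_mul (polyXinv_modp_mul_polyXinv m_gt0) modp_mul mulrCA.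
have modX_bar (g f : {poly F}) :
    (size f <= m.+1)%N -> (g * polybar m f) %% X = (g * polyXinv f) %% X.
  by move=> sf; rewrite -modp_mul (polybar_modp m_gt0 sf) modp_mul.
apply: in_eucl_dual_of_dvdp; rewrite ?size_modp_xm1 //=; apply/modp_eq0P.
  rewrite modpD !modX -modpD -mulrDr -modp_mul modpD -!modX_bar // -modpD modp_mul.
  exact/modp_eq0P/X_P.
by rewrite modX; apply/modp_eq0P/X_P/dvdp_mulr.
Qed.

Lemma eucl_LCD_dvdp_polyXinv (d : {poly F}) : eucl_LCD m g11 g12 g22 ->
  (size g11 <= m.+1)%N -> (size g12 <= m.+1)%N ->
  d %| X -> d %| g22 -> d %| g11 * polybar m g11 + g12 * polybar m g12 ->
  d %| polyXinv g11.
Proof.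
move=> LCD s11 s12 dX d_g22 d_h.
have v_code : in_qc_code m g11 g12 g22
    ((polyXinv (X %/ d) * g11) %% X, (polyXinv (X %/ d) * g12) %% X).
  by exists (polyXinv (X %/ d)), 0; rewrite mul0r addr0.
have [/modp_eq0P X_Pg11 _] := LCD _ v_code (in_eucl_dual_cofactor s11 s12 dX d_g22 d_h).
exact: dvdp_polyXinv_cofactor X_Pg11.
Qed.

End QuasiCyclicCode.

Lemma natf_neq0_coprime_card (F : finFieldType) m : coprime #|F| m -> m%:R != 0 :> F.
Proof.
move=> cop; have [p p_pr pchar_p] := finPcharP F.
have p_card : (p %| #|F|)%N.
  rewrite (dvdn_pcharf pchar_p) -[_%:R]/(1 *+ _) -FinRing.zmodXgE -cardsT.
  by rewrite (@expg_cardG _ [set: F]%G) ?inE.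
by rewrite -(dvdn_pcharf pchar_p) -prime_coprime //; apply: coprime_dvdl cop.
Qed.

Theorem lemma3p5 (F : finFieldType) (m : nat) (g11 g12 g22 : {poly F}) :
  (0 < m)%N -> coprime #|F| m ->
  g11 %| xm1 F m -> g22 %| xm1 F m ->
  (size g12 < size g22)%N ->
  (g11 * g22) %| (xm1 F m * g12) ->
  let g := gcdp g11 g22 in
  let l := xm1 F m %/ lcmp g11 g22 in
  let g22' := g22 %/ g in
  let r22 := gcdp g22' (recip g22') in
  self_reciprocal g -> self_reciprocal l ->
  ~~ coprimep r22 (g11 * polybar m g11 + g12 * polybar m g12) ->
  ~ eucl_LCD m g11 g12 g22.
Proof.
move=> m_gt0 cop X_g11 X_g22 s12 _ g l g22' r22 _ _ + LCD.
rewrite coprimep_def; set X := xm1 F m; set d := gcdp r22 _.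
have g22'_g22 : g22' %| g22 := divp_dvd (dvdp_gcdr _ _).
have d_g22' : d %| g22' := dvdp_trans (dvdp_gcdl _ _) (dvdp_gcdl _ _).
have d_X : d %| X := dvdp_trans d_g22' (dvdp_trans g22'_g22 X_g22).
have s12' := leq_trans (ltnW s12) (size_dvdp_xm1 m_gt0 X_g22).
have d_g11 := eucl_LCD_dvdp_polyXinv m_gt0 LCD (size_dvdp_xm1 m_gt0 X_g11) s12' d_X
  (dvdp_trans d_g22' g22'_g22) (dvdp_gcdr _ _).
have d_g22'X := dvdp_polyXinv_recip m_gt0 d_X (dvdp_trans g22'_g22 X_g22)
  (dvdp_trans (dvdp_gcdl _ _) (dvdp_gcdr _ _)).
have cop_d := coprimep_polyXinv_sqfree m_gt0 (natf_neq0_coprime_card cop) X_g22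
  d_g11 d_g22'X.
by rewrite (size_dvdp_xm1_coprimep_polyXinv m_gt0 d_X cop_d).
Qed.
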